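(* Let $\gamma\to_d\gamma'$ be a non-smooth d-step and let $k^*=\min\{\mathrm{rank}_\gamma(p,q) : (p,q)\in\mathrm{Edges},\ (p,q)\text{ non-smooth in }\gamma,\ \gamma'.p.d\ne\gamma.p.d \text{ or } \gamma'.q.d\neq\gamma.q.d\}$ (the set is nonempty). Then: (i) for every $e\in\mathrm{Edges}$, if $\mathrm{rank}_{\gamma'}(e)\le k^*$ and $e$ is non-smooth in $\gamma'$, then $\mathrm{rank}_\gamma(e)=\mathrm{rank}_{\gamma'}(e)$ and $e$ is non-smooth in $\gamma$; (ii) for every $e\in\mathrm{Edges}$, if $\mathrm{rank}_{\gamma}(e)<k^*$ and $e$ is non-smooth in $\gamma$, then $\mathrm{rank}_{\gamma'}(e)=\mathrm{rank}_{\gamma}(e)$ and $e$ is non-smooth in $\gamma'$; (iii) there exists $e\in\mathrm{Edges}$ with $\mathrm{rank}_\gamma(e)=k^*$, $e$ non-smooth in $\gamma$, and such that if $e$ is non-smooth in $\gamma'$ then $\mathrm{rank}_{\gamma'}(e)>\mathrm{rank}_\gamma(e)$.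
   Context: Let $G$ be a finite, connected, undirected graph with node set $V$ and a distinguished node $r$ (the root); $\mathrm{Edges}=\{(p,q)\in V\times V : p,q\text{ adjacent}\}$ (both orientations). Each node $p$ has a fixed ordered list $N(p)$ of its neighbours. A configuration $\gamma$ assigns to each node $p$ a value $\gamma.p.d\in\mathbb N$ and a neighbour $\gamma.p.par\in N(p)$. For a non-root $p$ let $Dist_p(\gamma)=\min\{\gamma.q.d+1 : q\in N(p)\}$. Algorithm BFS: Root enabled iff $\gamma.r.d\neq 0$, executing sets $r.d:=0$. Non-root $p$, action CD: enabled iff $\gamma.p.d\ne Dist_p(\gamma)$, executing sets $p.d:=Dist_p(\gamma)$. Non-root $p$, action CP: enabled iff $\gamma.p.d=Dist_p(\gamma)$ and $\gamma.q_0.d+1\neq\gamma.p.d$ with $q_0=\gamma.p.par$; executing sets $p.par$ to the first $q\in N(p)$ with $\gamma.q.d+1=\gamma.p.d$. A step $\gamma\to\gamma'$ holds iff a nonempty set $S$ of enabled nodes simultaneously execute their enabled action (evaluated in $\gamma$), others unchanged. A d-step $\gamma\to_d\gamma'$ is a step with $\gamma.r.d=\gamma'.r.d$ and $\gamma.p.d\neq\gamma'.p.d$ for some $p$. An edge $(p,q)$ is smooth in $\gamma$ if $|\gamma.p.d-\gamma.q.d|\le 1$, non-smooth otherwise. A d-step $\gamma\to_d\gamma'$ is smooth if every node $p$ with $\gamma'.p.d\neq\gamma.p.d$ has all its edges $(p,q)$, $q\in N(p)$, smooth in $\gamma$; otherwise it is non-smooth. $\mathrm{rank}_\gamma(p,q)=\min(\gamma.p.d,\gamma.q.d)$.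 *)

From mathcomp Require Import all_boot.
Set Implicit Arguments. Unset Strict Implicit. Unset Printing Implicit Defensive.

Record config (V : finType) := Config { dv : V -> nat; par : V -> V }.

Section BFS.
Variables (V : finType) (N : V -> seq V) (r : V).

(* Dist_p(g) = min { g.q.d + 1 : q in N(p) } (N p nonempty for non-root p in a
   connected graph with >= 2 nodes; the head value is only a seed for the min). *)
Definition Dist (g : config V) (p : V) : nat :=
  \big[minn/(dv g (head p (N p))).+1]_(q <- N p) (dv g q).+1.

Definition CD_enabled g p := (p != r) && (dv g p != Dist g p).
Definition CP_enabled g p :=
  [&& p != r, dv g p == Dist g p & (dv g (par g p)).+1 != dv g p].
Definition root_enabled g p := (p == r) && (dv g r != 0).
Definition enabled g p := [|| root_enabled g p, CD_enabled g p | CP_enabled g p].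

Definition first_par g p : V :=
  nth p (N p) (find (fun q => (dv g q).+1 == dv g p) (N p)).

Definition exec_d g p : nat :=
  if p == r then 0 else if CD_enabled g p then Dist g p else dv g p.
Definition exec_par g p : V :=
  if p == r then par g p else if CP_enabled g p then first_par g p else par g p.

Definition step (g g' : config V) : Prop :=
  exists S : {set V}, [/\ S != set0,
    (forall p, p \in S -> enabled g p) &
    (forall p, dv g' p = (if p \in S then exec_d g p else dv g p) /\
               par g' p = (if p \in S then exec_par g p else par g p))].

Definition dstep g g' : Prop :=
  step g g' /\ dv g r = dv g' r /\ exists p, dv g p <> dv g' p.

Definition smooth (g : config V) (p q : V) : bool :=
  (dv g p <= (dv g q).+1) && (dv g q <= (dv g p).+1).

Definition nonsmooth_dstep (adj : rel V) g g' : Prop :=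
  dstep g g' /\ ~ (forall p, dv g' p <> dv g p -> forall q, adj p q -> smooth g p q).

Definition rank (g : config V) (p q : V) : nat := minn (dv g p) (dv g q).

Definition kstar_set (adj : rel V) g g' (p q : V) : bool :=
  [&& adj p q, ~~ smooth g p q & (dv g' p != dv g p) || (dv g' q != dv g q)].

Definition is_kstar (adj : rel V) g g' (k : nat) : Prop :=
  (exists p q, kstar_set adj g g' p q /\ rank g p q = k) /\
  (forall p q, kstar_set adj g g' p q -> k <= rank g p q).

Definition valid_config (adj : rel V) (g : config V) : Prop :=
  forall p, par g p \in N p.

End BFS.

(* A node that changes its distance takes the value [Dist] of the old
   configuration, i.e. one more than some neighbour (or than itself, if it has
   no neighbours).  If it does not grow, the edge to that neighbour was non-smooth
   and changing, so its old rank is at least k*; hence a changed node either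
   grows or ends strictly above k*.  Moreover a new value never exceeds any
   neighbour's old value plus one, and a non-smooth edge of rank below k*
   stays untouched.  The three claims are then linear arithmetic on the two
   endpoints of an edge. *)

From mathcomp Require Import all_boot.
From mathcomp Require Import zify.

Set Implicit Arguments.
Unset Strict Implicit.
Unset Printing Implicit Defensive.

Lemma bigmin_leq_mem (T : eqType) (s : seq T) (F : T -> nat) x0 y :
  y \in s -> \big[minn/x0]_(x <- s) F x <= F y.
Proof.
elim: s => [|a s IHs] //=; rewrite big_cons in_cons => /orP [/eqP->|ys].
  exact: geq_minl.
exact: leq_trans (geq_minr _ _) (IHs ys).
Qed.

Lemma bigmin_seed_or_mem (T : eqType) (s : seq T) (F : T -> nat) x0 :
  \big[minn/x0]_(x <- s) F x = x0 \/
  exists2 y, y \in s & \big[minn/x0]_(x <- s) F x = F y.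
Proof.
elim: s => [|a s IHs]; first by left; rewrite big_nil.
rewrite big_cons; have [Fa_le|Fa_gt] := leqP (F a) (\big[minn/x0]_(x <- s) F x).
  by right; exists a; rewrite ?mem_head ?(minn_idPl Fa_le).
case: IHs => [->|[y ys ->]]; first by left.
by right; exists y; rewrite // in_cons ys orbT.
Qed.

Section Dist.

Variables (V : finType) (N : V -> seq V) (adj : rel V).
Hypothesis N_adj : forall p q, (q \in N p) = adj p q.

Lemma Dist_le_adj g p q : adj p q -> Dist N g p <= (dv g q).+1.
Proof. by rewrite -N_adj; apply: bigmin_leq_mem. Qed.

Lemma Dist_attained g p :
  exists q, (adj p q \/ q = p) /\ Dist N g p = (dv g q).+1.
Proof.
case: (@bigmin_seed_or_mem _ (N p) (fun q => (dv g q).+1)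
  (dv g (head p (N p))).+1) => [seed|[q qNp minq]].
  case Np: (N p) => [|a s]; first by exists p; split; [right | rewrite /Dist Np big_nil].
  exists a; split; first by left; rewrite -N_adj Np mem_head.
  by rewrite /Dist seed Np.
by exists q; split; [left; rewrite -N_adj | rewrite /Dist minq].
Qed.

End Dist.

Section KStar.

Variables (V : finType) (N : V -> seq V) (r : V) (adj : rel V).
Hypothesis adj_sym : symmetric adj.
Hypothesis N_adj : forall p q, (q \in N p) = adj p q.
Variables g g' : config V.
Hypothesis g_step : step N r g g'.
Hypothesis root_fixed : dv g r = dv g' r.

Lemma changed_dv_Dist x :
  dv g' x != dv g x -> x != r /\ dv g' x = Dist N g x.
Proof.
move=> x_changed; have [S [_ _ execS]] := g_step; have [dv'x _] := execS x.
have xNr : x != r by apply: contraNneq x_changed => ->; rewrite root_fixed.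
split=> //; move: x_changed; rewrite dv'x; case: (x \in S); last by rewrite eqxx.
rewrite /exec_d (negbTE xNr) /CD_enabled xNr /=.
by case: ifP => //; rewrite eqxx.
Qed.

Lemma kstar_exists :
  ~ (forall p, dv g' p <> dv g p -> forall q, adj p q -> smooth g p q) ->
  exists k, is_kstar adj g g' k.
Proof.
move=> nonsmooth.
have [[p q] pq_kstar] : exists pq : V * V, kstar_set adj g g' pq.1 pq.2.
  apply/existsP; apply: contra_notT nonsmooth => /existsPn no_kstar p p_changed q pq.
  apply/negPn/negP => pq_rough; have /negP := no_kstar (p, q); apply.
  by rewrite /kstar_set pq pq_rough; apply/orP; left; apply/eqP.
pose ranked k := [exists pq : V * V, kstar_set adj g g' pq.1 pq.2 && (rank g pq.1 pq.2 == k)].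
have [|k /existsP [[p0 q0] /andP [kstar0 /eqP rank0]] kmin] := @ex_minnP ranked.
  by exists (rank g p q); apply/existsP; exists (p, q); rewrite pq_kstar eqxx.
exists k; split; first by exists p0, q0.
by move=> p1 q1 kstar1; apply: kmin; apply/existsP; exists (p1, q1); rewrite kstar1 eqxx.
Qed.

Variable k : nat.
Hypothesis kstar_min : forall p q, kstar_set adj g g' p q -> k <= rank g p q.

Lemma changed_grows_or_above_kstar x :
  dv g' x != dv g x -> dv g x < dv g' x \/ k < dv g' x.
Proof.
move=> x_changed; have [_ dv'x] := changed_dv_Dist x_changed.
have [lt_x|ge_x] := ltnP (dv g x) (dv g' x); [by left | right].
have [y [[xy|->] Dist_y]] := Dist_attained N_adj g x; rewrite Dist_y in dv'x;
  move/eqP: x_changed; rewrite dv'x in ge_x *; last by lia.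
move=> dec_x; have xy_kstar : kstar_set adj g g' x y.
  by rewrite /kstar_set xy /smooth dv'x /=; lia.
by have := kstar_min xy_kstar; rewrite /rank; lia.
Qed.

Lemma adj_dv_step x y : adj x y ->
  dv g' x = dv g x \/
  dv g' x <= (dv g y).+1 /\ (dv g x < dv g' x \/ k < dv g' x).
Proof.
move=> xy; have [|x_changed] := eqVneq (dv g' x) (dv g x); [by left | right].
split; last exact: changed_grows_or_above_kstar.
by rewrite (changed_dv_Dist x_changed).2; apply: Dist_le_adj.
Qed.

Lemma rough_edge_fixed_or_rank_ge p q : adj p q -> ~~ smooth g p q ->
  dv g' p = dv g p /\ dv g' q = dv g q \/ k <= rank g p q.
Proof.
move=> pq pq_rough.
have [changed|] := boolP ((dv g' p != dv g p) || (dv g' q != dv g q)).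
  by right; apply: kstar_min; rewrite /kstar_set pq pq_rough.
by rewrite negb_or !negbK => /andP [/eqP -> /eqP ->]; left.
Qed.

Lemma edge_dv_constraints p q : adj p q -> [/\
  dv g' p = dv g p \/ dv g' p <= (dv g q).+1 /\ (dv g p < dv g' p \/ k < dv g' p),
  dv g' q = dv g q \/ dv g' q <= (dv g p).+1 /\ (dv g q < dv g' q \/ k < dv g' q) &
  smooth g p q \/ dv g' p = dv g p /\ dv g' q = dv g q \/ k <= rank g p q].
Proof.
move=> pq; split; [exact: adj_dv_step | by apply: adj_dv_step; rewrite adj_sym |].
by have [|/(rough_edge_fixed_or_rank_ge pq)] := boolP (smooth g p q); [left | right].
Qed.

End KStar.

Theorem lemma6 (V : finType) (adj : rel V) (N : V -> seq V) (r : V)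
  (adj_sym : symmetric adj) (adj_irr : irreflexive adj)
  (adj_conn : forall x y : V, connect adj x y)
  (N_uniq : forall p, uniq (N p)) (N_adj : forall p q, (q \in N p) = adj p q)
  (g g' : config V)
  (g_valid : valid_config N adj g) (g'_valid : valid_config N adj g')
  (Hstep : nonsmooth_dstep N r adj g g') :
  exists k : nat, is_kstar adj g g' k /\
  (* (i) *)
  (forall p q, adj p q -> rank g' p q <= k -> ~~ smooth g' p q ->
     rank g p q = rank g' p q /\ ~~ smooth g p q) /\
  (* (ii) *)
  (forall p q, adj p q -> rank g p q < k -> ~~ smooth g p q ->
     rank g' p q = rank g p q /\ ~~ smooth g' p q) /\
  (* (iii) *)
  (exists p q, [/\ adj p q, rank g p q = k, ~~ smooth g p q &
     (~~ smooth g' p q -> rank g' p q > rank g p q)]).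
Proof.
have [[g_step [root_fixed _]] nonsmooth] := Hstep.
have [k [[p0 [q0 [kstar0 rank0]]] kstar_min]] := kstar_exists nonsmooth.
have constraints := edge_dv_constraints adj_sym N_adj g_step root_fixed kstar_min.
exists k; split; first by split; [exists p0, q0 | exact: kstar_min].
split; first by move=> p q /constraints []; rewrite /rank /smooth; lia.
split; first by move=> p q /constraints []; rewrite /rank /smooth; lia.
move: (kstar0) => /and3P [pq0 rough0 changed0].
exists p0, q0; split => //; have [] := constraints p0 q0 pq0.
by move: rough0 changed0 rank0; rewrite /rank /smooth; lia.
Qed.
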